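(* Let $n$ be a positive integer, $k$ an integer with $0\le k\le n$, and $0<\phi<\infty$. For integers $0\le \ell\le n$ and real $s$ define $$Q_\ell(s) = \frac{S(n-\ell,k,\phi e^{-s})}{S(n,k,\phi e^{-s})}.$$ Then for all real $s$, $$\frac{dQ_\ell}{ds}(s) = \phi e^{-s}\big[n\,Q_\ell(s)Q_1(s) - (n-\ell)\,Q_{\ell+1}(s)\big].$$
   Context: $S(j,k)$ denotes the (central) Stirling numbers of the second kind. The noncentral Stirling numbers of the second kind are defined, for integers $n\ge 0$, $k\ge 0$ and real $\phi$, by $S(n,k,\phi) = \sum_{r=0}^{n-k}\binom{n}{k+r}\phi^{n-k-r}S(k+r,k)$, with the convention $S(n',k,\phi)=0$ whenever $n'<k$ (including negative $n'$). For $\phi>0$ and $0\le k\le n$, $S(n,k,\phi)>0$. *)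

From HB Require Import structures.
From mathcomp Require Import all_boot all_order all_algebra.
From mathcomp Require Import all_classical all_reals all_analysis.
Set Implicit Arguments. Unset Strict Implicit. Unset Printing Implicit Defensive.
Import Order.TTheory GRing.Theory Num.Theory.
Local Open Scope ring_scope.

Fixpoint stirling2 (n k : nat) : nat :=
  match n, k with
  | 0, 0 => 1
  | 0, _.+1 => 0
  | _.+1, 0 => 0
  | n'.+1, k'.+1 => (k'.+1 * stirling2 n' k'.+1 + stirling2 n' k')%N
  end.

(* Noncentral Stirling numbers S(n,k,phi); the first argument is an integer,
   and S(n',k,phi) = 0 whenever n' < k (including negative n'). *)
Definition Snc (R : realType) (n : int) (k : nat) (phi : R) : R :=
  match n with
  | Posz m => if (m < k)%N then 0 else
      \sum_(r < (m - k).+1)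
        ('C(m, k + r))%:R * phi ^+ (m - k - r) * (stirling2 (k + r) k)%:R
  | Negz _ => 0
  end.

Definition Qfun (R : realType) (n k : nat) (phi : R) (l : nat) (s : R) : R :=
  Snc (n%:Z - l%:Z) k (phi * expR (- s)) / Snc n%:Z k (phi * expR (- s)).

From HB Require Import structures.
From mathcomp Require Import all_boot all_order all_algebra.
From mathcomp Require Import all_classical all_reals all_analysis.
From mathcomp Require Import ring.
Import Order.TTheory GRing.Theory Num.Theory.
Local Open Scope ring_scope.

(* For fixed k, x |-> S(m,k,x) is the polynomial sum_j C(m,j) S(j,k) x^(m-j),
   and (m+1-j) C(m+1,j) = (m+1) C(m,j) makes these polynomials an Appell
   sequence: d/dx S(m,k,x) = m S(m-1,k,x).  With x = phi e^-s we have
   dx/ds = -x, and the quotient rule for Q_l = S(n-l,k,x) / S(n,k,x), whose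
   denominator is positive for x > 0, gives the formula. *)

Lemma stirling2_small j k : (j < k)%N -> stirling2 j k = 0%N.
Proof.
elim: j k => [|j IH] [|k] //= ltjk.
by rewrite (IH k.+1 (ltnW ltjk)) (IH k ltjk) muln0.
Qed.

Lemma stirling2nn k : stirling2 k k = 1%N.
Proof. by elim: k => //= k ->; rewrite stirling2_small // muln0. Qed.

Section NoncentralStirling.
Context {R : realType}.
Implicit Types (m k : nat) (x : R).

Lemma Snc_natE m k x :
  Snc m%:Z k x = \sum_(j < m.+1) ('C(m, j) * stirling2 j k)%:R * x ^+ (m - j).
Proof.
transitivity (\sum_(0 <= j < m.+1) ('C(m, j) * stirling2 j k)%:R * x ^+ (m - j));
  last by rewrite big_mkord.
symmetry; rewrite /=; have [ltmk|lekm] := ltnP m k.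
  rewrite big_nat big1 // => j /andP[_ ltjm].
  by rewrite stirling2_small ?muln0 ?mul0r // (leq_trans ltjm ltmk).
rewrite (big_cat_nat (n := k)) //= 1?ltnW // big_nat big1 ?add0r; last first.
  by move=> j /andP[_ ltjk]; rewrite stirling2_small ?muln0 ?mul0r.
rewrite -{1}(add0n k) big_addn subSn // big_mkord; apply: eq_bigr => r _.
by rewrite natrM -subnDA [(r + k)%N]addnC; ring.
Qed.

Lemma Snc_gt0 m k x : (k <= m)%N -> 0 < x -> 0 < Snc m%:Z k x.
Proof.
move=> lekm x_gt0; rewrite Snc_natE (bigD1 (Ordinal (lekm : (k < m.+1)%N))) //=.
apply: ltr_wpDr; first by apply: sumr_ge0 => j _; rewrite mulr_ge0 // exprn_ge0 // ltW.
by rewrite stirling2nn muln1 mulr_gt0 ?exprn_gt0 // ltr0n bin_gt0.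
Qed.

Definition Snc_poly m k : {poly R} :=
  \sum_(j < m.+1) ('C(m, j) * stirling2 j k)%:R *: 'X^(m - j).

Lemma horner_Snc_poly m k x : (Snc_poly m k).[x] = Snc m%:Z k x.
Proof.
rewrite Snc_natE horner_sum; apply: eq_bigr => j _.
by rewrite hornerZ hornerXn.
Qed.

Lemma deriv_Snc_poly m k : (Snc_poly m.+1 k)^`() = m.+1%:R *: Snc_poly m k.
Proof.
rewrite /Snc_poly linear_sum big_ord_recr /= subnn derivZ derivXn mulr0n scaler0 addr0.
rewrite scaler_sumr; apply: eq_bigr => j _ /=.
have lejm : (j <= m)%N by rewrite -ltnS.
have bin_factor : ((m - j).+1 * 'C(m.+1, j) = m.+1 * 'C(m, j))%N.
  by rewrite -subSn // -mul_bin_down.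
rewrite derivZ derivXn subSn // -scalerMnr scalerMnl scalerA -mulr_natl -!natrM.
by rewrite mulnA bin_factor mulnA.
Qed.

Lemma is_derive_Snc m k x :
  is_derive x 1 (Snc m%:Z k) (m%:R * Snc (m%:Z - 1) k x).
Proof.
have -> : Snc m%:Z k = horner (Snc_poly m k) by apply/funext => y; rewrite horner_Snc_poly.
apply: is_derive_eq; case: m => [|m].
  by rewrite mul0r /Snc_poly big_ord1 derivZ derivXn mulr0n scaler0 horner0.
by rewrite deriv_Snc_poly hornerZ (subzSS m 0) subr0 horner_Snc_poly.
Qed.

Lemma is_derive_Snc_expN m k (phi s : R) :
  is_derive s 1 (fun t => Snc m%:Z k (phi * expR (- t)))
    (m%:R * Snc (m%:Z - 1) k (phi * expR (- s)) * - (phi * expR (- s))).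
Proof.
apply: (is_derive1_comp (g := fun t => phi * expR (- t))); first exact: is_derive_Snc.
have dexpN : is_derive s 1 (expR \o -%R) (expR (- s) * - 1).
  exact: is_derive1_comp (is_derive_expR _) (is_deriveNid s 1).
by apply: is_derive_eq (is_deriveZ phi dexpN) _; rewrite mulrN1 -mulrN.
Qed.

End NoncentralStirling.

Theorem lemma1 (R : realType) (n k l : nat) (phi : R) :
  (0 < n)%N -> (k <= n)%N -> (l <= n)%N -> 0 < phi ->
  forall s : R,
    is_derive s 1 (Qfun n k phi l)
      (phi * expR (- s) *
        (n%:R * Qfun n k phi l s * Qfun n k phi 1 s
         - (n - l)%:R * Qfun n k phi l.+1 s)).
Proof.
move=> _ lekn leln phi_gt0 s.
have Sn_neq0 : Snc n%:Z k (phi * expR (- s)) != 0.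
  by rewrite gt_eqF // Snc_gt0 // mulr_gt0 ?expR_gt0.
have nBl : n%:Z - l%:Z = (n - l)%N by rewrite subzn.
have nBl1 : n%:Z - l.+1%:Z = (n - l)%N%:Z - 1 by rewrite -nBl intS opprD addrA addrAC.
have dQ := is_deriveM (is_derive_Snc_expN (n - l)%N k phi s)
  (is_deriveV (f := fun t => Snc n%:Z k (phi * expR (- t))) Sn_neq0
    (is_derive_Snc_expN n k phi s)).
rewrite /Qfun nBl nBl1; apply: is_derive_eq dQ _.
set x := phi * expR (- s) in Sn_neq0 *.
by rewrite -![_ *: _]/(_ * _); field.
Qed.
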